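(* Let $\mathbf{A}$ be a (left and right) Noetherian domain. Then the following three conditions are equivalent: (i) every left ideal and every right ideal of $\mathbf{A}$ is stably free; (ii) every finitely generated torsion-free (left or right) $\mathbf{A}$-module is stably free; (iii) every finitely generated left ideal and every finitely generated right ideal of $\mathbf{A}$ is stably free.
   Context: Rings are associative with $1$, not necessarily commutative. A domain is a nonzero ring without zero divisors. A module $P$ over $\mathbf{A}$ is stably free if there exist integers $q\ge 0$, $r\ge 0$ with $P\oplus \mathbf{A}^{q}\cong \mathbf{A}^{q+r}$. A module $M$ over a domain is torsion-free if $am=0$ with $a\neq 0$ implies $m=0$. A Noetherian domain satisfying these equivalent conditions is called a stably free ideal domain. *)

From HB Require Import structures.
From mathcomp Require Import all_boot all_order all_algebra.
Set Implicit Arguments. Unset Strict Implicit. Unset Printing Implicit Defensive.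
Import GRing.Theory.
Local Open Scope ring_scope.

Definition is_domain (R : nzRingType) : Prop :=
  forall a b : R, a * b = 0 -> a = 0 \/ b = 0.

Definition is_submod (R : nzRingType) (M : lmodType R) (S : {pred M}) : Prop :=
  0 \in S /\ (forall x y, x \in S -> y \in S -> x + y \in S) /\
  (forall (a : R) x, x \in S -> a *: x \in S).

Definition fg_sub (R : nzRingType) (M : lmodType R) (S : {pred M}) : Prop :=
  exists s : seq M, forall x : M,
    x \in S <-> exists c : 'I_(size s) -> R, x = \sum_(i < size s) c i *: s`_i.

Definition fg_module (R : nzRingType) (M : lmodType R) : Prop :=
  fg_sub (M := M) predT.

Definition torsion_free (R : nzRingType) (M : lmodType R) : Prop :=
  forall (a : R) (m : M), a != 0 -> a *: m = 0 -> m = 0.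

(* The submodule S of M is stably free: there are q, r and an R-linear
   isomorphism S (+) R^q ~= R^(q+r), given by (x, v) |-> phi x + psi v
   with phi : S -> R^(q+r) and psi : R^q -> R^(q+r) R-linear. *)
Definition stably_free_sub (R : nzRingType) (M : lmodType R) (S : {pred M}) : Prop :=
  exists (q r : nat) (phi : M -> 'rV[R]_(q + r)) (psi : 'rV[R]_q -> 'rV[R]_(q + r)),
    (forall (a : R) x y, x \in S -> y \in S -> phi (a *: x + y) = a *: phi x + phi y) /\
    (forall (a : R) u v, psi (a *: u + v) = a *: psi u + psi v) /\
    (forall x x' v v', x \in S -> x' \in S ->
        phi x + psi v = phi x' + psi v' -> x = x' /\ v = v') /\
    (forall w, exists x v, x \in S /\ phi x + psi v = w).

Definition stably_free (R : nzRingType) (M : lmodType R) : Prop :=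
  stably_free_sub (M := M) predT.

(* Left ideals of R = submodules of the regular left module R^o;
   right ideals of R = left ideals of the converse ring R^c;
   right R-modules = left R^c-modules. *)
Definition is_left_ideal (R : nzRingType) (I : {pred R^o}) : Prop := is_submod I.
Definition is_right_ideal (R : nzRingType) (I : {pred (R^c)^o}) : Prop := is_submod I.

Definition left_noetherian (R : nzRingType) : Prop :=
  forall I : {pred R^o}, is_left_ideal I -> fg_sub I.
Definition right_noetherian (R : nzRingType) : Prop :=
  forall I : {pred (R^c)^o}, is_right_ideal I -> fg_sub I.

From HB Require Import structures.
From mathcomp Require Import all_boot all_order all_algebra.
From Stdlib Require Import ClassicalEpsilon Classical.
Set Implicit Arguments. Unset Strict Implicit. Unset Printing Implicit Defensive.
Import GRing.Theory.
Local Open Scope ring_scope.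

(* (C1) <-> (C3) holds because all ideals are finitely generated, and
   (C2) -> (C3) because an ideal is a torsion-free submodule of R.
   For (C1) -> (C2) we establish, in order:
   - stable freeness is inherited by extensions: if p maps S onto a stably
     free image with stably free kernel, then p splits and S is stably free;
   - hence, by induction on n (projecting onto the first coordinate), if all
     left ideals are stably free then so is every submodule of R^n;
   - a left Noetherian domain satisfies the left Ore condition, since the
     left ideal spanned by b, ba, ba^2, ... is finitely generated;
   - over a domain with both Ore conditions, a finitely generated
     torsion-free module embeds linearly in some R^d: take coordinates in a
     maximal independent family and clear a common right denominator.
   Stable freeness is handled through the variant [sfree], which allows any
   target rank n >= q instead of q + r and so avoids casts when adding ranks. *)

Definition asbool (P : Prop) : bool :=
  if excluded_middle_informative P then true else false.

Lemma asboolP (P : Prop) : asbool P <-> P.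
Proof. by rewrite /asbool; case: excluded_middle_informative. Qed.

Local Arguments choice {A B R}.

Lemma regular_scaleE (R : nzRingType) (a x : R^o) : a *: x = a * x.
Proof. by []. Qed.

Lemma sum_cast_ord (V : nmodType) n m (e : n = m) (F : 'I_m -> V) :
  \sum_(i < n) F (cast_ord e i) = \sum_(i < m) F i.
Proof. by case: m / e F => F; apply: eq_bigr => i _; rewrite cast_ord_id. Qed.

Section LinearMaps.
Variables (R : nzRingType) (M N : lmodType R).

Definition linear_on (S : {pred M}) (f : M -> N) :=
  forall (a : R) x y, x \in S -> y \in S -> f (a *: x + y) = a *: f x + f y.

Definition linear_map (f : M -> N) :=
  forall (a : R) x y, f (a *: x + y) = a *: f x + f y.

Lemma linear_on0 (S : {pred M}) f : linear_on S f -> 0 \in S -> f 0 = 0.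
Proof.
move=> lf S0; have := lf 1 0 0 S0 S0; rewrite !scale1r addr0 => e.
by apply: (@addrI _ (f 0)); rewrite addr0 -e.
Qed.

Lemma linear_map_on (S : {pred M}) f : linear_map f -> linear_on S f.
Proof. by move=> lf a x y _ _; apply: lf. Qed.

Lemma linear_map0 f : linear_map f -> f 0 = 0.
Proof. by move=> lf; apply: (@linear_on0 predT) => //; apply: linear_map_on. Qed.

Lemma linear_mapD f : linear_map f -> forall x y, f (x + y) = f x + f y.
Proof. by move=> lf x y; rewrite -[x in LHS]scale1r lf scale1r. Qed.

Lemma linear_mapZ f : linear_map f -> forall a x, f (a *: x) = a *: f x.
Proof. by move=> lf a x; rewrite -[a *: x]addr0 lf linear_map0 // addr0. Qed.

Lemma linear_mapB f : linear_map f -> forall x y, f (x - y) = f x - f y.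
Proof. by move=> lf x y; rewrite linear_mapD // -scaleN1r linear_mapZ // scaleN1r. Qed.

Lemma linear_map_sum f : linear_map f -> forall I (r : seq I) P (F : I -> M),
  f (\sum_(i <- r | P i) F i) = \sum_(i <- r | P i) f (F i).
Proof.
move=> lf I r P F; elim/big_rec2: _ => [|i y1 y2 _ <-]; first exact: linear_map0.
by rewrite linear_mapD.
Qed.

End LinearMaps.

Section Submodules.
Variables (R : nzRingType) (M : lmodType R) (S : {pred M}).
Hypothesis hS : is_submod S.

Lemma submod0 : 0 \in S.
Proof. by case: hS. Qed.

Lemma submodD x y : x \in S -> y \in S -> x + y \in S.
Proof. by case: hS => _ [SD _]; apply: SD. Qed.

Lemma submodZ a x : x \in S -> a *: x \in S.
Proof. by case: hS => _ [_ SZ]; apply: SZ. Qed.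

Lemma submodN x : x \in S -> - x \in S.
Proof. by move=> xS; rewrite -scaleN1r submodZ. Qed.

Lemma submodB x y : x \in S -> y \in S -> x - y \in S.
Proof. by move=> xS yS; rewrite submodD ?submodN. Qed.

Lemma submod_sum I (r : seq I) (P : pred I) (F : I -> M) :
  (forall i, P i -> F i \in S) -> \sum_(i <- r | P i) F i \in S.
Proof.
move=> FS; elim/big_rec: _ => [|i x Pi xS]; first exact: submod0.
by apply: submodD => //; apply: FS.
Qed.

Lemma fg_gen_mem (s : seq M) :
  (forall x, x \in S <-> exists c : 'I_(size s) -> R, x = \sum_(i < size s) c i *: s`_i) ->
  forall k, (k < size s)%N -> s`_k \in S.
Proof.
move=> hs k lt; apply/hs; exists (fun j : 'I_(size s) => ((j : nat) == k)%:R).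
rewrite (bigD1 (Ordinal lt)) //= eqxx scale1r big1 ?addr0 // => j /eqP ne.
by rewrite (_ : ((j : nat) == k) = false) ?scale0r //; apply/eqP => e; apply/ne/val_inj.
Qed.

End Submodules.

Lemma submodT (R : nzRingType) (M : lmodType R) : is_submod (predT : {pred M}).
Proof. by []. Qed.

Lemma linear_on_sum (R : nzRingType) (M N : lmodType R) (S : {pred M}) (f : M -> N) :
  is_submod S -> linear_on S f ->
  forall I (r : seq I) (c : I -> R) (F : I -> M), (forall i, F i \in S) ->
  f (\sum_(i <- r) c i *: F i) = \sum_(i <- r) c i *: f (F i).
Proof.
move=> hS lf I r c F FS.
elim: r => [|i r IH]; first by rewrite !big_nil (linear_on0 lf (submod0 hS)).
rewrite !big_cons lf ?IH ?FS //.
by apply: (submod_sum hS) => j _; apply: submodZ.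
Qed.

Section ImageKernel.
Variables (R : nzRingType) (M N : lmodType R).

Definition image_in (f : M -> N) (S : {pred M}) : {pred N} :=
  [pred y | asbool (exists x, x \in S /\ f x = y)].

Definition kernel_in (p : M -> N) (S : {pred M}) : {pred M} :=
  [pred x | (x \in S) && (p x == 0)].

Lemma image_inP f S y : y \in image_in f S <-> exists x, x \in S /\ f x = y.
Proof. by rewrite inE; apply: asboolP. Qed.

Lemma image_submod f S : linear_map f -> is_submod S -> is_submod (image_in f S).
Proof.
move=> lf hS; split; first by apply/image_inP; exists 0; rewrite submod0 ?linear_map0.
split.
  move=> _ _ /image_inP [x [xS <-]] /image_inP [y [yS <-]]; apply/image_inP.
  by exists (x + y); rewrite submodD ?linear_mapD.
move=> a _ /image_inP [x [xS <-]]; apply/image_inP.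
by exists (a *: x); rewrite submodZ ?linear_mapZ.
Qed.

Lemma preimage_submod f (S : {pred N}) :
  linear_map f -> is_submod S -> is_submod ([pred x | f x \in S] : {pred M}).
Proof.
move=> lf hS; split; first by rewrite inE linear_map0 ?submod0.
split; first by move=> x y; rewrite !inE linear_mapD //; apply: submodD.
by move=> a x; rewrite !inE linear_mapZ //; apply: submodZ.
Qed.

End ImageKernel.

Section StablyFree.
Variable R : nzRingType.

Definition sfree (M : lmodType R) (S : {pred M}) :=
  exists q n (phi : M -> 'rV[R]_n) (psi : 'rV[R]_q -> 'rV[R]_n),
    (q <= n)%N /\ linear_on S phi /\ linear_map psi /\
    (forall x x' v v', x \in S -> x' \in S ->
        phi x + psi v = phi x' + psi v' -> x = x' /\ v = v') /\
    (forall w, exists x v, x \in S /\ phi x + psi v = w).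

Lemma castmx_linear m n m' n' (e : (m = m') * (n = n')) :
  linear_map (castmx e : 'M[R]_(m, n) -> 'M[R]_(m', n')).
Proof. by move=> a A B; apply/matrixP => i j; rewrite !castmxE !mxE !castmxE. Qed.

Lemma sfree_stably_free (M : lmodType R) (S : {pred M}) : sfree S -> stably_free_sub S.
Proof.
case=> q [n [phi [psi [hq [lphi [lpsi [inj sur]]]]]]].
have e : n = (q + (n - q))%N by rewrite subnKC.
pose cast : 'rV[R]_n -> 'rV[R]_(q + (n - q)) := castmx (erefl 1%N, e).
pose uncast : 'rV[R]_(q + (n - q)) -> 'rV[R]_n := castmx (esym (erefl 1%N), esym e).
have lcast : linear_map cast := castmx_linear (erefl 1%N, e).
exists q, (n - q)%N, (cast \o phi), (cast \o psi).
split; first by move=> a x y xS yS /=; rewrite lphi // lcast.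
split; first by move=> a u v /=; rewrite lpsi lcast.
split.
  move=> x x' v v' xS x'S /=; rewrite -!(linear_mapD lcast).
  by move=> /(congr1 uncast); rewrite /uncast /cast !castmxK; apply: inj.
move=> w; have [x [v [xS xv]]] := sur (uncast w).
by exists x, v; split => //=; rewrite -(linear_mapD lcast) xv /cast /uncast castmxKV.
Qed.

Lemma stably_free_sfree (M : lmodType R) (S : {pred M}) : stably_free_sub S -> sfree S.
Proof.
case=> q [r [phi [psi [lphi [lpsi [inj sur]]]]]].
by exists q, (q + r)%N, phi, psi; split; first exact: leq_addr.
Qed.

Lemma sfree_transport (M M' : lmodType R) (S : {pred M}) (S' : {pred M'}) (g : M -> M') :
  linear_on S g -> (forall x, x \in S -> g x \in S') ->
  (forall x y, x \in S -> y \in S -> g x = g y -> x = y) ->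
  (forall y, y \in S' -> exists x, x \in S /\ g x = y) ->
  sfree S' -> sfree S.
Proof.
move=> lg gS ginj gsur [q [n [phi [psi [hq [lphi [lpsi [inj sur]]]]]]]].
exists q, n, (phi \o g), psi; split => //; split.
  by move=> a x y xS yS /=; rewrite lg // lphi // gS.
split => //; split.
  move=> x x' v v' xS x'S /= e.
  have [gx ->] := inj _ _ _ _ (gS _ xS) (gS _ x'S) e.
  by split => //; apply: ginj.
move=> w; have [y [v [yS yv]]] := sur w; have [x [xS gx]] := gsur y yS.
by exists x, v; rewrite /= gx.
Qed.

End StablyFree.

Section Extension.
Variables (R : nzRingType) (M N : lmodType R) (p : M -> N) (S : {pred M}).
Hypotheses (lp : linear_map p) (hS : is_submod S).

Let I := image_in p S.
Let K := kernel_in p S.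

Let pS x : x \in S -> p x \in I.
Proof. by move=> xS; apply/image_inP; exists x. Qed.

Lemma sfree_section : sfree I -> exists s : N -> M,
  linear_on I s /\ (forall y, y \in I -> s y \in S) /\ (forall y, y \in I -> p (s y) = y).
Proof.
case=> q [n [phi [psi [hq [lphi [lpsi [inj sur]]]]]]].
have hI : is_submod I := image_submod lp hS.
have [XV hXV] : exists XV : 'I_n -> N * 'rV[R]_q, forall j,
    (XV j).1 \in I /\ phi (XV j).1 + psi (XV j).2 = delta_mx 0 j.
  apply: (@choice _ _ (fun j (xv : N * 'rV[R]_q) =>
    xv.1 \in I /\ phi xv.1 + psi xv.2 = delta_mx 0 j)) => j.
  by have [x [v [xI e]]] := sur (delta_mx 0 j); exists (x, v).
pose X j := (XV j).1; pose V j := (XV j).2.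
have [Z hZ] := choice (fun j => iffLR (image_inP p S (X j)) (proj1 (hXV j))).
exists (fun y => \sum_(j < n) phi y 0 j *: Z j); split.
  move=> a y y' yI y'I; rewrite lphi //.
  under eq_bigr do rewrite !mxE scalerDl -scalerA.
  by rewrite big_split /= -scaler_sumr.
split; first by move=> y yI; apply: (submod_sum hS) => j _; apply/submodZ/(proj1 (hZ j)).
move=> y yI; rewrite linear_map_sum //.
under eq_bigr => j _ do rewrite linear_mapZ // (proj2 (hZ j)).
set y1 := \sum_(j < n) _.
have y1I : y1 \in I by apply: (submod_sum hI) => j _; apply/submodZ/(proj1 (hXV j)).
have e : phi y1 + psi (\sum_(j < n) phi y 0 j *: V j) = phi y + psi 0.
  rewrite /y1 (linear_on_sum hI) => [|//|j]; last exact: (proj1 (hXV j)).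
  rewrite linear_map_sum //.
  under [X in _ + X]eq_bigr do rewrite linear_mapZ //.
  rewrite -big_split /= (linear_map0 lpsi) addr0 [RHS]row_sum_delta.
  by apply: eq_bigr => j _; rewrite -scalerDr (proj2 (hXV j)).
by have [] := inj _ _ _ _ y1I yI e.
Qed.

(* Stable freeness is closed under extensions: if the image and the kernel of
   p on S are stably free, so is S (which is the direct sum K (+) s(I)). *)
Lemma sfree_ext : sfree I -> sfree K -> sfree S.
Proof.
move=> sfI sfK; have [s [ls [sS ps]]] := sfree_section sfI.
case: sfI => qI [nI [phI [psI [hqI [lphI [lpsI [injI surI]]]]]]].
case: sfK => qK [nK [phK [psK [hqK [lphK [lpsK [injK surK]]]]]]].
have kK x : x \in S -> x - s (p x) \in K.
  move=> xS; rewrite inE submodB ?sS ?pS //=.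
  by rewrite (linear_mapB lp) ps ?subrr ?pS.
exists (qK + qI)%N, (nK + nI)%N,
  (fun x => row_mx (phK (x - s (p x))) (phI (p x))),
  (fun v => row_mx (psK (lsubmx v)) (psI (rsubmx v))).
split; first exact: leq_add.
split.
  move=> a x y xS yS /=.
  have -> : a *: x + y - s (p (a *: x + y)) = a *: (x - s (p x)) + (y - s (p y)).
    rewrite lp ls ?pS // scalerBr opprD !addrA; congr (_ + _); by rewrite addrAC.
  by rewrite lphK ?kK // lp lphI ?pS // scale_row_mx add_row_mx.
split.
  move=> a u v; rewrite (linearP (@lsubmx R 1 qK qI)) (linearP (@rsubmx R 1 qK qI)).
  by rewrite lpsK lpsI scale_row_mx add_row_mx.
split.
  move=> x x' v v' xS x'S; rewrite !add_row_mx => /eq_row_mx [eK eI].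
  have [ep ev2] := injI _ _ _ _ (pS xS) (pS x'S) eI.
  have [ex ev1] := injK _ _ _ _ (kK _ xS) (kK _ x'S) eK.
  split; last by rewrite -[v]hsubmxK -[v']hsubmxK ev1 ev2.
  by move: ex; rewrite ep => /addIr.
move=> w; have [k [vK [kKp ek]]] := surK (lsubmx w).
have [y [vI [yI ey]]] := surI (rsubmx w).
move: kKp; rewrite inE => /andP [kS /eqP pk].
have xS : k + s y \in S by rewrite submodD ?sS.
have px : p (k + s y) = y by rewrite (linear_mapD lp) pk add0r ps.
exists (k + s y), (row_mx vK vI); split => //.
by rewrite px addrK row_mxKl row_mxKr add_row_mx ek ey hsubmxK.
Qed.

End Extension.

Section RowSubmodules.
Variable R : nzRingType.

Lemma sfree_rV0 (S : {pred 'rV[R]_0}) : is_submod S -> sfree S.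
Proof.
move=> hS; exists 0%N, 0%N, (fun _ => 0), (fun _ => 0).
split => //; do 2 (split; first by move=> *; rewrite scaler0 addr0).
split; first by move=> x x' v v' _ _ _; split; apply/matrixP => i [].
by move=> w; exists 0, 0; split; [exact: submod0 | apply/matrixP => i []].
Qed.

Lemma first_coord_linear n : linear_map (fun v : 'rV[R]_(1 + n) => lsubmx v 0 0 : R^o).
Proof. by move=> a u v; rewrite !mxE. Qed.

Lemma row0_linear n : linear_map (fun u : 'rV[R]_n => row_mx (0 : 'rV[R]_1) u).
Proof. by move=> a u v; rewrite scale_row_mx add_row_mx scaler0 addr0. Qed.

Lemma row0_rsubmx n (v : 'rV[R]_(1 + n)) : lsubmx v 0 0 = 0 -> row_mx 0 (rsubmx v) = v.
Proof.
move=> v0; rewrite -[RHS]hsubmxK; congr row_mx.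
by apply/matrixP => i j; rewrite (ord1 i) (ord1 j) v0 mxE.
Qed.

Hypothesis ideals_sfree : forall I : {pred R^o}, is_left_ideal I -> sfree I.

(* If all left ideals are stably free, so is every submodule of R^n: the
   first coordinate maps S onto a left ideal, with kernel a submodule of R^(n-1). *)
Lemma row_submod_sfree n (S : {pred 'rV[R]_n}) : is_submod S -> sfree S.
Proof.
elim: n S => [|n IH] S hS; first exact: sfree_rV0.
have lp := @first_coord_linear n.
apply: (sfree_ext lp hS (ideals_sfree (image_submod lp hS))).
have hK := preimage_submod (@row0_linear n) hS.
apply: (sfree_transport (g := @rsubmx R 1 1 n) _ _ _ _ (IH _ hK)).
- by move=> a x y _ _; rewrite (linearP (@rsubmx R 1 1 n)).
- by move=> x /andP [xS /eqP px]; rewrite inE row0_rsubmx.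
- move=> x y /andP [_ /eqP px] /andP [_ /eqP py] e.
  by rewrite -(row0_rsubmx px) -(row0_rsubmx py) e.
- move=> u; rewrite inE => uS; exists (row_mx 0 u); rewrite row_mxKr; split => //.
  by rewrite inE uS row_mxKl mxE eqxx.
Qed.

End RowSubmodules.

Definition ore_l (R : nzRingType) := forall a b : R, a != 0 -> b != 0 ->
  exists u v : R, u * a = v * b /\ u * a != 0.
Definition ore_r (R : nzRingType) := forall a b : R, a != 0 -> b != 0 ->
  exists u v : R, a * u = b * v /\ a * u != 0.

Lemma ore_r_of_conv (R : nzRingType) : ore_l R^c -> ore_r R.
Proof. by move=> ol a b ha hb; have [u [v [e ne]]] := ol a b ha hb; exists u, v. Qed.

Lemma conv_ore_r (R : nzRingType) : ore_l R -> ore_r R^c.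
Proof. by move=> ol a b ha hb; have [u [v [e ne]]] := ol a b ha hb; exists u, v. Qed.

Lemma conv_domain (R : nzRingType) : is_domain R -> is_domain R^c.
Proof. by move=> hdom a b /hdom [] ->; [right | left]. Qed.

Section Domain.
Variable R : nzRingType.
Hypothesis hdom : is_domain R.

Lemma domain_mul_neq0 (a b : R) : a != 0 -> b != 0 -> a * b != 0.
Proof. by move=> ha hb; apply/eqP => /hdom [] /eqP; apply/negP. Qed.

Lemma domain_mulIr (a x y : R) : a != 0 -> a * x = a * y -> x = y.
Proof.
move=> ha e; have : a * (x - y) = 0 by rewrite mulrBr e subrr.
by case/hdom => [/eqP|/eqP]; [rewrite (negbTE ha) | rewrite subr_eq0 => /eqP].
Qed.

Lemma no_ore_powers (a b : R) : a != 0 -> b != 0 ->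
  (forall u v : R, u * a = v * b -> u * a = 0) ->
  forall n (r : nat -> R), \sum_(0 <= i < n) r i * (b * a ^+ i) != b * a ^+ n.
Proof.
move=> ha hb no_ore n; elim: n => [|n IH] r; first by rewrite big_geq // expr0 mulr1 eq_sym.
rewrite big_nat_recl // expr0 mulr1.
under eq_bigr do rewrite exprSr mulrA mulrA.
rewrite -big_distrl /= exprSr mulrA; apply/eqP => e.
set T := \sum_(0 <= i < n) _ in e.
have : (b * a ^+ n - T) * a = r 0%N * b by rewrite mulrBl -e addrK.
move=> /no_ore /hdom [] /eqP; last by rewrite (negbTE ha).
rewrite subr_eq0 => /eqP eT; move: (IH (fun i => r i.+1)) => /eqP; apply.
by rewrite eT /T; apply: eq_bigr => i _; rewrite mulrA.
Qed.

End Domain.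

Section Noetherian.
Variable R : nzRingType.
Hypothesis hlN : left_noetherian R.

Definition left_span (x : nat -> R) : {pred R^o} :=
  [pred y | asbool (exists n (r : nat -> R), y = \sum_(0 <= i < n) r i * x i)].

Lemma left_spanP x y :
  y \in left_span x <-> exists n (r : nat -> R), y = \sum_(0 <= i < n) r i * x i.
Proof. by rewrite inE; apply: asboolP. Qed.

Lemma pad_sum n N (r c : nat -> R) : (n <= N)%N ->
  \sum_(0 <= i < n) r i * c i = \sum_(0 <= i < N) (if (i < n)%N then r i else 0) * c i.
Proof.
move=> le; rewrite [RHS](@big_cat_nat _ _ _ n) //=.
rewrite [X in _ = _ + X]big1_seq ?addr0; last first.
  move=> i /andP [_]; rewrite mem_index_iota => /andP [le_ni _].
  by rewrite (leq_gtF le_ni) mul0r.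
by apply: eq_big_seq => i; rewrite mem_index_iota => /andP [_ ->].
Qed.

Lemma left_span_ideal x : is_left_ideal (left_span x).
Proof.
split; first by apply/left_spanP; exists 0%N, (fun _ => 0); rewrite big_geq.
split.
  move=> _ _ /left_spanP [n [r ->]] /left_spanP [m [s ->]]; apply/left_spanP.
  exists (maxn n m), (fun i => (if (i < n)%N then r i else 0) + (if (i < m)%N then s i else 0)).
  rewrite (pad_sum _ _ (leq_maxl n m)) (pad_sum _ _ (leq_maxr n m)) -big_split /=.
  by apply: eq_bigr => i _; rewrite mulrDl.
move=> c _ /left_spanP [n [r ->]]; apply/left_spanP; exists n, (fun i => c * r i).
by rewrite regular_scaleE mulr_sumr; apply: eq_bigr => i _; rewrite mulrA.
Qed.

Lemma left_span_stationary (x : nat -> R) :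
  exists N (r : nat -> R), x N = \sum_(0 <= i < N) r i * x i.
Proof.
have [s hs] := hlN (left_span_ideal x).
have [NR hNR] : exists NR : 'I_(size s) -> nat * (nat -> R), forall k : 'I_(size s),
    s`_k = \sum_(0 <= i < (NR k).1) (NR k).2 i * x i.
  apply: (@choice _ _ (fun (k : 'I_(size s)) (nr : nat * (nat -> R)) =>
     s`_k = \sum_(0 <= i < nr.1) nr.2 i * x i)) => k.
  by have /left_spanP [n [r e]] := fg_gen_mem hs (ltn_ord k); exists (n, r).
pose N := (\max_(k < size s) (NR k).1)%N.
pose coef (k : 'I_(size s)) i := if (i < (NR k).1)%N then (NR k).2 i else 0.
have hk (k : 'I_(size s)) : s`_k = \sum_(0 <= i < N) coef k i * x i.
  by rewrite hNR; apply: pad_sum; exact: (@leq_bigmax _ (fun k => (NR k).1)).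
have : x N \in left_span x.
  apply/left_spanP; exists N.+1, (fun i => (i == N)%:R).
  rewrite big_nat_recr //= eqxx mul1r big1_seq ?add0r // => i.
  by rewrite mem_index_iota => /andP [_ /ltn_eqF ->]; rewrite mul0r.
case/hs => c eN; exists N, (fun i => \sum_(k < size s) c k * coef k i); rewrite eN.
under eq_bigr => k _ do rewrite hk regular_scaleE mulr_sumr.
rewrite exchange_big /=; apply: eq_bigr => i _; rewrite mulr_suml.
by apply: eq_bigr => k _; rewrite mulrA.
Qed.

Lemma noeth_ore : is_domain R -> ore_l R.
Proof.
move=> hdom a b ha hb; apply: NNPP => hn.
have no_ore u v : u * a = v * b -> u * a = 0.
  by move=> e; apply: NNPP => ne; apply: hn; exists u, v; split => //; apply/eqP.
have [N [r eN]] := left_span_stationary (fun i => b * a ^+ i).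
by move: (no_ore_powers hdom ha hb no_ore N r); rewrite -eN eqxx.
Qed.

End Noetherian.

Section Embedding.
Variable R : nzRingType.
Hypotheses (hdom : is_domain R) (ol : ore_l R) (or : ore_r R).

(* Common right multiple: finitely many fractions A x ^-1 B x can be written
   with a common right denominator, i.e. B x * c \in A x * R for all x. *)
Lemma common_right_multiple (X : finType) (A B : X -> R) : (forall x, A x != 0) ->
  exists c, c != 0 /\ forall x, exists w, B x * c = A x * w.
Proof.
move=> hA.
suff [c [hc hl]] : exists c, c != 0 /\
    forall x, x \in enum X -> exists w, B x * c = A x * w.
  by exists c; split => // x; apply: hl; rewrite mem_enum.
elim: (enum X) => [|x l [c [hc IH]]]; first by exists 1; rewrite oner_neq0.
case: (eqVneq (B x * c) 0) => h.
  exists c; split => // y; rewrite inE => /orP [/eqP ->|yl]; last exact: IH.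
  by exists 0; rewrite h mulr0.
have [u [v [e ne]]] := or (hA x) h.
have hv : v != 0 by apply: contraNneq ne => v0; rewrite e v0 mulr0.
exists (c * v); split; first exact: domain_mul_neq0.
move=> y; rewrite inE => /orP [/eqP ->|yl]; first by exists u; rewrite mulrA e.
by have [w ew] := IH y yl; exists (w * v); rewrite mulrA ew mulrA.
Qed.

Variable M : lmodType R.
Hypothesis htf : torsion_free M.

Definition indep (E : seq M) := forall u : 'I_(size E) -> R,
  \sum_(i < size E) u i *: E`_i = 0 -> forall i, u i = 0.

Lemma indep_eq E : indep E -> forall u u' : 'I_(size E) -> R,
  \sum_(i < size E) u i *: E`_i = \sum_(i < size E) u' i *: E`_i -> forall i, u i = u' i.
Proof.
move=> iE u u' e i; apply/eqP; rewrite -subr_eq0; apply/eqP.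
apply: (iE (fun i => u i - u' i)).
by under eq_bigr do rewrite scalerBl; rewrite sumrB e subrr.
Qed.

Lemma independent_span (t : seq M) : exists E, indep E /\ forall g, g \in t ->
  exists a (u : 'I_(size E) -> R), a != 0 /\ a *: g = \sum_(i < size E) u i *: E`_i.
Proof.
elim: t => [|g t [E [iE hE]]]; first by exists [::]; split => // u _ [].
case: (classic (indep (g :: E))) => hi.
  exists (g :: E); split => // h; rewrite inE => /orP [/eqP ->|ht].
    exists 1, (fun i : 'I_(size E).+1 => ((i : nat) == 0%N)%:R); split; first exact: oner_neq0.
    by rewrite big_ord_recl /= scale1r big1 ?addr0 // => i _; rewrite scale0r.
  have [a [u [ha e]]] := hE h ht.
  exists a, (fun i => oapp u 0 (unlift ord0 i)); split => //.
  rewrite big_ord_recl unlift_none scale0r add0r e.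
  by apply: eq_bigr => i _; rewrite liftK /= add0n.
have [u [su [i0 hi0]]] : exists u : 'I_(size E).+1 -> R,
    \sum_(i < (size E).+1) u i *: (g :: E)`_i = 0 /\ exists i, u i != 0.
  apply: NNPP => hn; apply: hi => u su i; apply/eqP; apply: negbNE; apply/negP => ne.
  by apply: hn; exists u; split => //; exists i.
move: su; rewrite big_ord_recl => su.
have hg : u ord0 != 0.
  apply/eqP => u0; move: su; rewrite u0 scale0r add0r => su.
  have u0E : forall j, u (lift ord0 j) = 0.
    by apply: iE; rewrite -[RHS]su; apply: eq_bigr => i _ /=; rewrite add0n.
  by move: hi0; case: (unliftP ord0 i0) => [j ->|->]; rewrite ?u0E ?u0 eqxx.
exists E; split => // h; rewrite inE => /orP [/eqP ->|ht]; last exact: hE.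
exists (u ord0), (fun i => - u (lift ord0 i)); split => //.
move/eqP: su; rewrite addr_eq0 => /eqP ->; rewrite -sumrN.
by apply: eq_bigr => i _; rewrite scaleNr lift0.
Qed.

(* y is the coordinate vector of m along E, right-multiplied by c: for some
   a != 0, a m = sum_i u_i E_i and a y_i = u_i c (so y_i = a^-1 u_i c). *)
Definition scaled_coords (E : seq M) (c : R) (m : M) (y : 'rV[R]_(size E)) :=
  exists (a : R) (u : 'I_(size E) -> R), a != 0 /\
    a *: m = \sum_(i < size E) u i *: E`_i /\ forall i, a * y 0 i = u i * c.
Arguments scaled_coords : clear implicits.

Section ScaledCoords.
Variables (E : seq M) (c : R).

Lemma scaled_coords0 : scaled_coords E c 0 0.
Proof.
exists 1, (fun _ => 0); split; first exact: oner_neq0.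
split; first by rewrite scaler0 big1 // => i _; rewrite scale0r.
by move=> i; rewrite mxE mulr0 mul0r.
Qed.

Lemma scaled_coordsD m m' y y' :
  scaled_coords E c m y -> scaled_coords E c m' y' -> scaled_coords E c (m + m') (y + y').
Proof.
move=> [a [u [ha [em ey]]]] [a' [u' [ha' [em' ey']]]].
have [s [t [e ne]]] := ol ha ha'.
exists (s * a), (fun i => s * u i + t * u' i); split => //; split.
  rewrite scalerDr {2}e -!scalerA em em' !scaler_sumr -big_split /=.
  by apply: eq_bigr => i _; rewrite !scalerA scalerDl.
by move=> i; rewrite mxE mulrDr {2}e -!mulrA ey ey' !mulrA mulrDl.
Qed.

Lemma scaled_coordsZ r m y : scaled_coords E c m y -> scaled_coords E c (r *: m) (r *: y).
Proof.
move=> [a [u [ha [em ey]]]].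
case: (eqVneq r 0) => [->|hr]; first by rewrite !scale0r; apply: scaled_coords0.
have [s [t [e ne]]] := ol ha hr.
have ht : t != 0 by apply: contraNneq ne => t0; rewrite e t0 mul0r.
exists t, (fun i => s * u i); split => //; split.
  by rewrite scalerA -e -scalerA em scaler_sumr; apply: eq_bigr => i _; rewrite scalerA.
by move=> i; rewrite mxE mulrA -e -mulrA ey mulrA.
Qed.

Hypothesis iE : indep E.

Lemma scaled_coords_uniq m y y' :
  scaled_coords E c m y -> scaled_coords E c m y' -> y = y'.
Proof.
move=> [a [u [ha [em ey]]]] [a' [u' [ha' [em' ey']]]].
have [s [t [e ne]]] := ol ha ha'.
have hu : forall i, s * u i = t * u' i.
  apply: (indep_eq iE).
  under eq_bigr do rewrite -scalerA. under [RHS]eq_bigr do rewrite -scalerA.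
  by rewrite -!scaler_sumr -em -em' !scalerA e.
apply/matrixP => i j; rewrite (ord1 i); apply: (domain_mulIr hdom ne).
by rewrite -mulrA ey mulrA hu -mulrA -ey' mulrA -e.
Qed.

Lemma scaled_coords_eq0 m : c != 0 -> scaled_coords E c m 0 -> m = 0.
Proof.
move=> hc [a [u [ha [em ey]]]].
have u0 i : u i = 0.
  by have := ey i; rewrite mxE mulr0 => /esym /hdom [] // /eqP; rewrite (negbTE hc).
by apply: (htf ha); rewrite em big1 // => i _; rewrite u0 scale0r.
Qed.

End ScaledCoords.

Lemma generators_scaled_coords (s E : seq M) :
  (forall g, g \in s -> exists a (u : 'I_(size E) -> R),
     a != 0 /\ a *: g = \sum_(i < size E) u i *: E`_i) ->
  exists c, c != 0 /\ forall k : 'I_(size s), exists y, scaled_coords E c s`_k y.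
Proof.
move=> hE.
have [AU hAU] : exists AU : 'I_(size s) -> R * ('I_(size E) -> R), forall k : 'I_(size s),
    (AU k).1 != 0 /\ (AU k).1 *: s`_k = \sum_(i < size E) (AU k).2 i *: E`_i.
  apply: (@choice _ _ (fun (k : 'I_(size s)) (au : R * ('I_(size E) -> R)) =>
    au.1 != 0 /\ au.1 *: s`_k = \sum_(i < size E) au.2 i *: E`_i)) => k.
  by have [a [u [ha e]]] := hE _ (mem_nth 0 (ltn_ord k)); exists (a, u).
have [c [hc hw]] := common_right_multiple (X := prod 'I_(size s) 'I_(size E))
  (A := fun x => (AU x.1).1) (fun x => (AU x.1).2 x.2) (fun x => proj1 (hAU x.1)).
have [W hW] := choice hw.
exists c; split => // k; exists (\row_i W (k, i)), (AU k).1, (AU k).2.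
by have [ha e] := hAU k; do 2 split => //; move=> i; rewrite mxE (hW (k, i)).
Qed.

Lemma torsion_free_embedding : fg_module M ->
  exists d (f : M -> 'rV[R]_d), linear_map f /\ injective f.
Proof.
case=> s hs.
have [E [iE hE]] := independent_span s.
have [c [hc hsc]] := generators_scaled_coords hE.
have [w hw] := choice hsc.
have total m : exists y, scaled_coords E c m y.
  have [c' ->] := (hs m).1 isT; exists (\sum_(k < size s) c' k *: w k).
  elim/big_rec2: _ => [|k y1 y2 _ G]; first exact: scaled_coords0.
  exact: scaled_coordsD (scaled_coordsZ _ (hw k)) G.
have [f hf] := choice total.
exists (size E), f; split.
  move=> a x y; apply: (scaled_coords_uniq iE (hf _)).
  exact: scaled_coordsD (scaled_coordsZ _ (hf x)) (hf y).
move=> x y e; apply/eqP; rewrite -subr_eq0; apply/eqP; apply: (scaled_coords_eq0 (E := E) hc).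
by have := scaled_coordsD (hf x) (scaled_coordsZ (-1) (hf y)); rewrite e !scaleN1r subrr.
Qed.

End Embedding.

Section SubmoduleType.
Variables (R : nzRingType) (M : lmodType R) (S : {pred M}) (hS : is_submod S).

(* The submodule S as an R-module in its own right; the carrier mentions hS,
   on which its operations depend, so that the structure attaches to it. *)
Definition SubT : Type := (fun _ : is_submod S => {x : M | x \in S}) hS.
HB.instance Definition _ := [isSub of SubT for @proj1_sig M (fun x => x \in S)].
HB.instance Definition _ := [Choice of SubT by <:].

Definition sub_zero : SubT := exist _ 0 (submod0 hS).
Definition sub_add (x y : SubT) : SubT := exist _ (val x + val y) (submodD hS (valP x) (valP y)).
Definition sub_opp (x : SubT) : SubT := exist _ (- val x) (submodN hS (valP x)).
Definition sub_scale (a : R) (x : SubT) : SubT := exist _ (a *: val x) (submodZ hS a (valP x)).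

Lemma sub_addA : associative sub_add.
Proof. by move=> x y z; apply: val_inj; rewrite /= addrA. Qed.
Lemma sub_addC : commutative sub_add.
Proof. by move=> x y; apply: val_inj; rewrite /= addrC. Qed.
Lemma sub_add0 : left_id sub_zero sub_add.
Proof. by move=> x; apply: val_inj; rewrite /= add0r. Qed.
Lemma sub_addN : left_inverse sub_zero sub_opp sub_add.
Proof. by move=> x; apply: val_inj; rewrite /= addNr. Qed.

HB.instance Definition _ := GRing.isZmodule.Build SubT sub_addA sub_addC sub_add0 sub_addN.

Lemma sub_scaleA a b v : sub_scale a (sub_scale b v) = sub_scale (a * b) v.
Proof. by apply: val_inj; rewrite /= scalerA. Qed.
Lemma sub_scale1 : left_id 1 sub_scale.
Proof. by move=> x; apply: val_inj; rewrite /= scale1r. Qed.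
Lemma sub_scaleDr : right_distributive sub_scale +%R.
Proof. by move=> a x y; apply: val_inj; rewrite /= scalerDr. Qed.
Lemma sub_scaleDl v : {morph sub_scale^~ v: a b / a + b}.
Proof. by move=> a b; apply: val_inj; rewrite /= scalerDl. Qed.

HB.instance Definition _ :=
  GRing.Zmodule_isLmodule.Build R SubT sub_scaleA sub_scale1 sub_scaleDr sub_scaleDl.

Lemma val_sum (I : Type) (r : seq I) (F : I -> SubT) :
  val (\sum_(i <- r) F i) = \sum_(i <- r) val (F i).
Proof. by elim/big_rec2: _ => // i y1 y2 _ <-. Qed.

Lemma sub_torsion_free : torsion_free M -> torsion_free SubT.
Proof.
move=> htf a x ha /(congr1 val) /(htf _ _ ha) x0.
by apply: val_inj; rewrite /= -[LHS]/(sval x) x0.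
Qed.

Lemma sub_fg_module : fg_sub S -> fg_module SubT.
Proof.
case=> s hs; pose sT := map (insubd sub_zero) s.
have es : size sT = size s by rewrite size_map.
have nT i : (i < size s)%N -> val sT`_i = s`_i.
  have e0 : insubd sub_zero 0 = 0 :> SubT by apply: val_inj; rewrite insubdK ?submod0.
  by move=> lt; rewrite -e0 (nth_map 0) // insubdK // (fg_gen_mem hs).
exists sT => x; split => // _.
have [c ec] := (hs (val x)).1 (valP x).
exists (fun i => c (cast_ord es i)); apply: val_inj.
rewrite val_sum ec -(sum_cast_ord es (fun j => c j *: s`_j)).
by apply: eq_bigr => i _; rewrite /= nT // -es.
Qed.

Lemma sub_stably_free : stably_free SubT -> stably_free_sub S.
Proof.
move=> /stably_free_sfree sfT; apply: sfree_stably_free.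
apply: (sfree_transport (g := insubd sub_zero) _ _ _ _ sfT) => //.
- move=> a x y xS yS; apply: val_inj.
  by rewrite insubdK ?submodD ?submodZ //= !insubdK.
- by move=> x y xS yS /(congr1 val); rewrite !insubdK.
- by move=> y _; exists (val y); split; [exact: valP | rewrite valKd].
Qed.

End SubmoduleType.
Arguments sub_torsion_free [R M S] hS.
Arguments sub_stably_free [R M S] hS.

(* Over a domain with both Ore conditions, if all left ideals are stably free
   then so is every finitely generated torsion-free module, being isomorphic
   to a submodule of some R^d. *)
Lemma ideals_to_modules (R : nzRingType) : is_domain R -> ore_l R -> ore_r R ->
  (forall I : {pred R^o}, is_left_ideal I -> stably_free_sub I) ->
  forall M : lmodType R, fg_module M -> torsion_free M -> stably_free M.
Proof.
move=> hdom ol or hI M fgM tfM.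
have [d [f [lf injf]]] := torsion_free_embedding hdom ol or tfM fgM.
have hF := image_submod lf (submodT M).
have sfF := row_submod_sfree (fun I hI' => stably_free_sfree (hI I hI')) hF.
apply/sfree_stably_free/(sfree_transport (g := f) _ _ _ _ sfF).
- exact: linear_map_on.
- by move=> x _; apply/image_inP; exists x.
- by move=> x y _ _; apply: injf.
- by move=> y /image_inP [x [_ <-]]; exists x.
Qed.

Lemma regular_torsion_free (R : nzRingType) : is_domain R -> torsion_free R^o.
Proof. by move=> hdom a m ha /hdom [] // /eqP; rewrite (negbTE ha). Qed.

Lemma modules_to_ideals (R : nzRingType) : is_domain R ->
  (forall M : lmodType R, fg_module M -> torsion_free M -> stably_free M) ->
  forall I : {pred R^o}, is_left_ideal I -> fg_sub I -> stably_free_sub I.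
Proof.
move=> hdom sfM I hI fgI; apply: (sub_stably_free hI).
exact: (sfM _ (sub_fg_module hI fgI) (sub_torsion_free hI (regular_torsion_free hdom))).
Qed.

Lemma all_fg_iff (R : nzRingType) (M : lmodType R) (P : {pred M} -> Prop) :
  (forall I, P I -> fg_sub I) ->
  (forall I, P I -> stably_free_sub I) <-> (forall I, P I -> fg_sub I -> stably_free_sub I).
Proof.
move=> fg; split=> sf I hI; first by move=> _; apply: sf.
exact: sf I hI (fg I hI).
Qed.

Theorem mainTheorem1 (R : nzRingType)
  (hdom : is_domain R) (hlN : left_noetherian R) (hrN : right_noetherian R) :
  let C1 := (forall I : {pred R^o}, is_left_ideal I -> stably_free_sub I) /\
            (forall I : {pred (R^c)^o}, is_right_ideal I -> stably_free_sub I) in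
  let C2 := (forall M : lmodType R, fg_module M -> torsion_free M -> stably_free M) /\
            (forall M : lmodType R^c, fg_module M -> torsion_free M -> stably_free M) in
  let C3 := (forall I : {pred R^o}, is_left_ideal I -> fg_sub I -> stably_free_sub I) /\
            (forall I : {pred (R^c)^o}, is_right_ideal I -> fg_sub I -> stably_free_sub I) in
  (C1 <-> C2) /\ (C2 <-> C3).
Proof.
move=> C1 C2 C3.
have hdomc := conv_domain hdom.
have olR : ore_l R := noeth_ore hlN hdom.
have olRc : ore_l R^c := noeth_ore hrN hdomc.
have [orR orRc] := (ore_r_of_conv olRc, conv_ore_r olR).
have [l13 l31] := all_fg_iff (P := @is_left_ideal R) hlN.
have [r13 r31] := all_fg_iff (P := @is_right_ideal R) hrN.
have c13 : C1 <-> C3 by split=> -[hl hr]; split; auto.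
have c12 : C1 -> C2 := fun '(conj hl hr) =>
  conj (ideals_to_modules hdom olR orR hl) (ideals_to_modules hdomc olRc orRc hr).
have c23 : C2 -> C3 := fun '(conj hl hr) =>
  conj (modules_to_ideals hdom hl) (modules_to_ideals hdomc hr).
split; split=> hC.
- exact: c12.
- by apply/c13/c23.
- exact: c23.
- by apply/c12/c13.
Qed.
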